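(* Let $\Phi\in\Gamma_0(\mathbb{E})$ be Legendre and let $C\subseteq\mathbb{E}$ be a closed convex set with $C\cap\operatorname{int}\operatorname{dom}\Phi\neq\emptyset$. Assume that $D_\Phi(x,\cdot)$ is coercive for some $x\in\operatorname{dom}\Phi\cap C$. Then the Bregman projection $y\mapsto\operatorname{proj}_\Phi(y,C)$ is continuous on $\operatorname{int}\operatorname{dom}\Phi$.
   Context: $\mathbb{E}$ is a finite-dimensional Euclidean space; $\Gamma_0(\mathbb{E})$ the proper lsc convex functions $\mathbb{E}\to\mathbb{R}\cup\{+\infty\}$. $\Phi$ is Legendre if it is essentially smooth ($\operatorname{int}\operatorname{dom}\Phi\ne\emptyset$, differentiable there, $\|\nabla\Phi(z^\nu)\|\to\infty$ whenever $\operatorname{int}\operatorname{dom}\Phi\ni z^\nu\to z\in\operatorname{bdry}\operatorname{dom}\Phi$) and essentially strictly convex (strictly convex on every convex subset of $\operatorname{dom}\partial\Phi$). $D_\Phi(z_1,z_2)=\Phi(z_1)-\Phi(z_2)-\langle\nabla\Phi(z_2),z_1-z_2\rangle$ if $z_1\in\operatorname{dom}\Phi$, $z_2\in\operatorname{int}\operatorname{dom}\Phi$, and $+\infty$ otherwise. The Bregman projection onto $C$ is $\operatorname{proj}_\Phi(y,C)=\operatorname{argmin}_{x\in C}D_\Phi(x,y)$. It is known (Bauschke–Borwein) that under the stated assumptions on $C$, for every $y\in\operatorname{int}\operatorname{dom}\Phi$ this argmin is a single point lying in $C\cap\operatorname{int}\operatorname{dom}\Phi$, characterized by $\langle\nabla\Phi(\bar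 z)-\nabla\Phi(y),z-\bar z\rangle\ge0$ for all $z\in C$ (with $\bar z\in C\cap\operatorname{int}\operatorname{dom}\Phi$). A function $h$ is coercive if $h(z)\to\infty$ as $\|z\|\to\infty$. *)

(* E = R^n (row vectors 'rV[R]_n) with the standard
   inner product; R : realType. *)
From HB Require Import structures.
From mathcomp Require Import all_boot all_order all_algebra.
From mathcomp Require Import all_classical all_reals all_analysis.
Set Implicit Arguments. Unset Strict Implicit. Unset Printing Implicit Defensive.
Import Order.TTheory GRing.Theory Num.Theory.
Import numFieldNormedType.Exports.
Local Open Scope classical_set_scope.
Local Open Scope ring_scope.

Section Defs.
Variables (R : realType) (n : nat).
Notation E := 'rV[R]_n.

Definition dotp (u v : E) : R := \sum_(i < n) u 0 i * v 0 i.
Definition enorm (u : E) : R := Num.sqrt (dotp u u).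

Definition dom (f : E -> \bar R) : set E := [set z | (f z < +oo)%E].

Definition proper_fun (f : E -> \bar R) : Prop :=
  (forall z, f z != -oo%E) /\ (exists z, (f z < +oo)%E).

Definition convex_fun (f : E -> \bar R) : Prop :=
  forall (x y : E) (t : R), 0 <= t -> t <= 1 ->
    (f (t *: x + (1 - t) *: y)%R <= t%:E * f x + (1 - t)%R%:E * f y)%E.

Definition Gamma0 (f : E -> \bar R) : Prop :=
  [/\ proper_fun f, lower_semicontinuous f & convex_fun f].

Definition convex_set_E (S : set E) : Prop :=
  forall x y (t : R), S x -> S y -> 0 <= t -> t <= 1 -> S (t *: x + (1 - t) *: y).

Definition strictly_convex_on (f : E -> \bar R) (S : set E) : Prop :=
  forall x y (t : R), S x -> S y -> x != y -> 0 < t -> t < 1 ->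
    (f (t *: x + (1 - t) *: y)%R < t%:E * f x + (1 - t)%R%:E * f y)%E.

(* real part of f (meaningful on dom f) *)
Definition freal (f : E -> \bar R) : E -> R := fun z => fine (f z).

(* gradient: the vector representing the Frechet derivative w.r.t. dotp *)
Definition grad (f : E -> \bar R) (z : E) : E :=
  \row_(i < n) ('d (freal f) z) (delta_mx 0 i).

Definition subdiff (f : E -> \bar R) (z : E) : set E :=
  [set g | f z \is a fin_num /\
           forall y, (f z + (dotp g (y - z)%R)%:E <= f y)%E].
Definition dom_subdiff (f : E -> \bar R) : set E :=
  [set z | exists g, subdiff f z g].

Definition boundary (S : set E) : set E := closure S `\` interior S.

Definition essentially_smooth (f : E -> \bar R) : Prop :=
  [/\ interior (dom f) !=set0,
      (forall z, interior (dom f) z -> differentiable (freal f) z) &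
      (forall (u : nat -> E) (z : E), (forall k, interior (dom f) (u k)) ->
         u @ \oo --> z -> boundary (dom f) z ->
         (fun k => enorm (grad f (u k))) @ \oo --> +oo)].

Definition essentially_strictly_convex (f : E -> \bar R) : Prop :=
  forall S, S `<=` dom_subdiff f -> convex_set_E S -> strictly_convex_on f S.

Definition Legendre (f : E -> \bar R) : Prop :=
  essentially_smooth f /\ essentially_strictly_convex f.

Definition bregman (f : E -> \bar R) (z1 z2 : E) : \bar R :=
  if `[< dom f z1 /\ interior (dom f) z2 >] then
    (f z1 - f z2 - (dotp (grad f z2) (z1 - z2)%R)%:E)%E
  else +oo%E.

Definition is_bregman_proj (f : E -> \bar R) (C : set E) (y p : E) : Prop :=
  C p /\ forall x, C x -> (bregman f p y <= bregman f x y)%E.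

Definition coercive (h : E -> \bar R) : Prop :=
  forall M : R, exists r : R, forall z, r < enorm z -> (M%:E < h z)%E.

End Defs.

(* Essential smoothness keeps Bregman projections in int dom Phi: were the
   projection p of y on the boundary, minimality of D(., y) along the segment
   from p to a point of C in int dom Phi would bound grad Phi along that
   segment, where it must blow up.  On int dom Phi the differentiable convex
   Phi has a continuous gradient, and adding the variational inequalities
   characterising p = P y and p' = P y' gives
     D(p', p) <= <grad Phi y' - grad Phi y, p' - p>.
   The projections p' stay bounded for y' near y, since D(x, p') <= D(x, y')
   (Pythagorean inequality) and D(x, .) is coercive, so the right-hand side
   tends to 0.  Finally strict convexity and compactness of small spheres
   bound D(., p) away from 0 outside any ball around p, whence p' -> p. *)

From HB Require Import structures.
From mathcomp Require Import all_boot all_order all_algebra.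
From mathcomp Require Import all_classical all_reals all_analysis.
From mathcomp Require Import ring lra.
Import Order.TTheory GRing.Theory Num.Theory.
Import numFieldNormedType.Exports.
Local Open Scope classical_set_scope.
Local Open Scope ring_scope.
Set Implicit Arguments.
Unset Strict Implicit.

Section MatrixNorm.
Variables (R : realDomainType) (p q : nat).
Implicit Type A : 'M[R]_(p, q).

Lemma mx_entry_le_norm A i j : `|A i j| <= `|A|.
Proof.
rewrite [leRHS]mx_normrE.
exact: (le_bigmax 0 (fun ij : 'I_p * 'I_q => `|A ij.1 ij.2|) (i, j)).
Qed.

Lemma mx_norm_le A c : 0 <= c -> (forall i j, `|A i j| <= c) -> `|A| <= c.
Proof. by move=> c0 Ac; rewrite [leLHS]mx_normrE; apply: bigmax_le => // -[i j] _. Qed.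

Lemma mx_norm_delta_le i0 j0 : `|delta_mx i0 j0 : 'M[R]_(p, q)| <= 1.
Proof.
apply: mx_norm_le => // i j; rewrite mxE.
by case: (_ && _); rewrite ?normr1 ?normr0.
Qed.

End MatrixNorm.

Section InnerProduct.
Variables (R : realType) (n : nat).
Implicit Types u v w : 'rV[R]_n.

Lemma dotpC u v : dotp u v = dotp v u.
Proof. by apply: eq_bigr => i _; rewrite mulrC. Qed.

Lemma dotpDr u v w : dotp u (v + w) = dotp u v + dotp u w.
Proof. by rewrite /dotp -big_split; apply: eq_bigr => i _; rewrite mxE mulrDr. Qed.

Lemma dotpZr u v a : dotp u (a *: v) = a * dotp u v.
Proof. by rewrite /dotp mulr_sumr; apply: eq_bigr => i _; rewrite mxE mulrCA. Qed.

Lemma dotpNr u v : dotp u (- v) = - dotp u v.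
Proof. by rewrite -scaleN1r dotpZr mulN1r. Qed.

Lemma dotpBr u v w : dotp u (v - w) = dotp u v - dotp u w.
Proof. by rewrite dotpDr dotpNr. Qed.

Lemma dotpDl u v w : dotp (v + w) u = dotp v u + dotp w u.
Proof. by rewrite dotpC dotpDr !(dotpC u). Qed.

Lemma dotpNl u v : dotp (- v) u = - dotp v u.
Proof. by rewrite dotpC dotpNr dotpC. Qed.

Lemma dotpBl u v w : dotp (v - w) u = dotp v u - dotp w u.
Proof. by rewrite dotpDl dotpNl. Qed.

Lemma dotp_delta u i : dotp u (delta_mx 0 i) = u 0 i.
Proof.
rewrite /dotp (bigD1 i) //= big1 ?addr0; first by rewrite mxE !eqxx mulr1.
by move=> j ji; rewrite mxE (negbTE ji) andbF mulr0.
Qed.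

(* [`|u|] is the max norm of the coordinates, hence the factor [n]. *)
Lemma normr_dotp_le u v : `|dotp u v| <= n%:R * `|u| * `|v|.
Proof.
apply: le_trans (ler_norm_sum _ _ _) _.
apply: le_trans (_ : \sum_(i < n) `|u| * `|v| <= _).
  by apply: ler_sum => i _; rewrite normrM ler_pM ?mx_entry_le_norm.
by rewrite sumr_const card_ord -mulrA mulr_natl.
Qed.

Lemma normr_le_enorm u : `|u| <= enorm u.
Proof.
apply: mx_norm_le => [|i j]; first exact: sqrtr_ge0.
rewrite (ord1 i) -(sqrtr_sqr (u 0 j)) ler_sqrt; last first.
  by apply: sumr_ge0 => k _; rewrite -expr2 sqr_ge0.
rewrite /dotp (bigD1 j) //= -expr2 lerDl; apply: sumr_ge0 => k _.
by rewrite -expr2 sqr_ge0.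
Qed.

Lemma enorm_le_normr u : enorm u <= n%:R * `|u|.
Proof.
rewrite /enorm -(@ger0_norm _ (n%:R * _)) ?mulr_ge0 //.
rewrite -sqrtr_sqr ler_sqrt ?sqr_ge0 //.
apply: le_trans (_ : \sum_(i < n) `|u| ^+ 2 <= _).
  apply: ler_sum => i _; rewrite -expr2 -real_normK ?num_real //.
  by rewrite lerXn2r ?nnegrE ?mx_entry_le_norm.
rewrite sumr_const card_ord exprMn -[_ *+ n]mulr_natl ler_wpM2r ?sqr_ge0 //.
by rewrite expr2 -natrM ler_nat; case: n => // m; rewrite leq_pmulr.
Qed.

End InnerProduct.

Section DifferenceQuotient.
Variables (R : realType) (V : normedModType R) (F : V -> R) (z v : V).
Hypothesis dF : differentiable F z.

Lemma diff_quotient_cvg :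
  (fun t : R => t^-1 * (F (t *: v + z) - F z)) @ 0^'+ --> 'd F z v.
Proof. by rewrite -deriveE //; exact: cvg_dnbhs_at_right (diff_derivable dF). Qed.

Lemma diff_quotient_lt c : 'd F z v < c ->
  \forall t \near 0^'+, t^-1 * (F (t *: v + z) - F z) < c.
Proof.
move=> dc; have := (@cvgrPdist_lt _ _ _ _ (at_right_proper_filter (0 : R)) _ _).1
  diff_quotient_cvg (c - 'd F z v).
rewrite subr_gt0 => /(_ dc); apply: filterS => t.
by rewrite ltr_norml => /andP[+ _]; lra.
Qed.

Lemma cvg_ray : (fun t : R => t *: v + z) @ 0^'+ --> z.
Proof.
apply: cvg_at_right_filter; rewrite -[X in _ --> X]add0r.
apply: cvgD; last exact: cvg_cst.
by rewrite -(scale0r v); apply: cvgZ; [by move=> A | exact: cvg_cst].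
Qed.

Lemma diff_le_of_quotient c :
  (forall t : R, 0 < t -> t <= 1 -> t^-1 * (F (t *: v + z) - F z) <= c) ->
  'd F z v <= c.
Proof.
move=> qc; rewrite -(cvg_lim _ diff_quotient_cvg) //.
apply: limr_le; first exact: cvgP diff_quotient_cvg.
near=> t; apply: qc; near: t; [exact: nbhs_right_gt | exact: nbhs_right_le].
Unshelve. all: by end_near.
Qed.

Lemma le_diff_of_quotient c :
  (forall t : R, 0 < t -> t <= 1 -> c <= t^-1 * (F (t *: v + z) - F z)) ->
  c <= 'd F z v.
Proof.
move=> qc; rewrite -(cvg_lim _ diff_quotient_cvg) //.
apply: limr_ge; first exact: cvgP diff_quotient_cvg.
near=> t; apply: qc; near: t; [exact: nbhs_right_gt | exact: nbhs_right_le].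
Unshelve. all: by end_near.
Qed.

End DifferenceQuotient.

Lemma compact_sphere (R : realType) n (p : 'rV[R]_n) (e : R) :
  compact [set w : 'rV[R]_n | `|w - p| = e].
Proof.
apply: bounded_closed_compact.
  apply: filterS (nbhs_pinfty_ge (num_real (`|p| + e))) => M pM w /= we.
  by apply: le_trans pM; rewrite -we -{1}(subrK p w) addrC ler_normD.
apply: (@preimage_closed _ _ (fun w : 'rV[R]_n => `|w - p|) [set x | x = e]).
  move=> w _; apply: (@cvg_norm _ _ _ _ (nbhs_filter w)).
  by apply: (@cvgB _ _ _ _ (nbhs_filter w)); [exact: cvg_id | exact: cvg_cst].
exact: closed_eq.
Qed.

Lemma dotp_grad (R : realType) n (f : 'rV[R]_n -> \bar R) z v :
  dotp (grad f z) v = 'd (freal f) z v.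
Proof.
rewrite [in RHS](row_sum_delta v) linear_sum; apply: eq_bigr => i _.
by rewrite linearZ /= mxE mulrC.
Qed.

Section ConvexDifferentiable.
Variables (R : realType) (n : nat) (f : 'rV[R]_n -> \bar R).
Hypotheses (f_proper : proper_fun f) (f_convex : convex_fun f).
Hypothesis f_diff : forall z, interior (dom f) z -> differentiable (freal f) z.
(* The gradient is abstracted as [g]: unfolding [grad f] makes conversion
   checks between gradients at different points, e.g. inside [lra],
   prohibitively slow. *)
Variable g : 'rV[R]_n -> 'rV[R]_n.
Hypothesis gradE : grad f = g.

Local Notation E := 'rV[R]_n.
Local Notation F := (freal f).
Local Notation intdom := (interior (dom f)).
Local Notation D x y := (F x - F y - dotp (g y) (x - y)).
Implicit Types (c p u w x y z : E) (t : R).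

Lemma dom_freal z : dom f z -> f z = (F z)%:E.
Proof.
move=> dz; rewrite /freal fineK // fin_numE f_proper.1 /=.
by rewrite (lt_eqF dz).
Qed.

Lemma convex_dom : convex_set_E (dom f).
Proof.
move=> x y t dx dy t0 t1; have := f_convex x y t0 t1.
rewrite (dom_freal dx) (dom_freal dy) -!EFinM -EFinD => fxy.
exact: le_lt_trans fxy (ltry _).
Qed.

Lemma freal_convex x y t : dom f x -> dom f y -> 0 <= t -> t <= 1 ->
  F (t *: x + (1 - t) *: y) <= t * F x + (1 - t) * F y.
Proof.
move=> dx dy t0 t1; have := f_convex x y t0 t1.
by rewrite (dom_freal (convex_dom dx dy t0 t1)) (dom_freal dx) (dom_freal dy)
  -!EFinM -EFinD lee_fin.
Qed.

Lemma dotp_g z v : dotp (g z) v = 'd F z v.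
Proof. by rewrite -gradE dotp_grad. Qed.

Lemma tangent_le_freal z w : intdom z -> dom f w -> F z + dotp (g z) (w - z) <= F w.
Proof.
move=> iz dw; rewrite dotp_g -lerBrDl.
apply: (@diff_le_of_quotient _ _ F z (w - z) (f_diff iz)) => t t0 t1.
have := freal_convex dw (interior_subset iz) (ltW t0) t1.
have -> : t *: (w - z) + z = t *: w + (1 - t) *: z.
  by rewrite scalerBr scalerBl scale1r addrA addrAC.
by move=> cvx; rewrite mulrC ler_pdivrMr //; lra.
Qed.

Lemma tangent_le_freal_ray z v h : intdom z -> dom f (z + h *: v) ->
  F z + h * dotp (g z) v <= F (z + h *: v).
Proof.
move=> iz dzv; have := tangent_le_freal iz dzv.
by rewrite [z + _]addrC addrK dotpZr.
Qed.

Lemma bregman_ge0 w y : intdom y -> dom f w -> 0 <= D w y.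
Proof. by move=> iy dw; have := tangent_le_freal iy dw; lra. Qed.

Lemma grad_subdiff z : intdom z -> subdiff f z (g z).
Proof.
move=> iz; split; first by rewrite (dom_freal (interior_subset iz)).
move=> w; have [dw|ndw] := pselect (dom f w).
  rewrite (dom_freal dw) (dom_freal (interior_subset iz)) -EFinD lee_fin.
  exact: tangent_le_freal.
suff -> : f w = +oo%E by exact: leey.
by apply/eqP; rewrite -leye_eq leNgt; apply/negP.
Qed.

Lemma bregmanE w y : dom f w -> intdom y -> bregman f w y = (D w y)%:E.
Proof.
move=> dw iy; rewrite /bregman gradE asboolT; last by split.
by rewrite (dom_freal dw) (dom_freal (interior_subset iy)) -!EFinB.
Qed.

Lemma bregman_notdom w y : ~ dom f w -> bregman f w y = +oo%E.
Proof. by move=> ndw; rewrite /bregman asboolF // => -[]. Qed.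

Lemma interior_segment c p t : intdom c -> dom f p -> 0 < t -> t <= 1 ->
  intdom (t *: c + (1 - t) *: p).
Proof.
move=> /nbhs_ballP[rho rho0 cball] dp t0 t1.
apply/nbhs_ballP; exists (t * rho); first exact: mulr_gt0.
move=> w; rewrite -ball_normE /ball_ /= => tw.
pose w' := c + t^-1 *: (w - (t *: c + (1 - t) *: p)).
have dw' : dom f w'.
  apply: cball; rewrite -ball_normE /= /w' opprD addNKr normrN normrZ.
  by rewrite gtr0_norm ?invr_gt0 // distrC ltr_pdivrMl.
have -> : w = t *: w' + (1 - t) *: p.
  by apply/rowP => i; rewrite /w' !mxE; field; exact: lt0r_neq0.
exact: convex_dom dw' dp (ltW t0) t1.
Qed.

Lemma convex_interior : convex_set_E intdom.
Proof.
move=> x y t ix iy t0 t1; have [->|tn0] := eqVneq t 0.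
  by rewrite scale0r add0r subr0 scale1r.
by apply: interior_segment ix (interior_subset iy) _ t1; rewrite lt0r tn0.
Qed.

Lemma bregman_gt0 c p : essentially_strictly_convex f ->
  intdom p -> intdom c -> c != p -> 0 < D c p.
Proof.
move=> f_sc ip ic cp.
have int_subdiff : intdom `<=` dom_subdiff f.
  by move=> z iz; exists (g z); exact: grad_subdiff.
have half0 : 0 < 2^-1 :> R by rewrite invr_gt0.
have half1 : 2^-1 < 1 :> R by rewrite invf_lt1 // ltr1n.
set m := 2^-1 *: c + (1 - 2^-1) *: p.
have im : intdom m by apply: convex_interior => //; exact: ltW.
have := f_sc _ int_subdiff convex_interior c p 2^-1 ic ip cp half0 half1.
rewrite -/m (dom_freal (interior_subset im)) (dom_freal (interior_subset ic)).
rewrite (dom_freal (interior_subset ip)) -!EFinM -EFinD lte_fin => f_mid.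
have := tangent_le_freal ip (interior_subset im).
have -> : m - p = 2^-1 *: (c - p) by apply/rowP => j; rewrite !mxE; ring.
rewrite dotpZr; lra.
Qed.

Lemma dotp_grad_segment_le c p w t a : dom f p -> dom f w -> 0 < t -> t <= 1 ->
  intdom (t *: c + (1 - t) *: p) -> F p + t * a <= F (t *: c + (1 - t) *: p) ->
  dotp (g (t *: c + (1 - t) *: p)) (w - c) <= F w - F p - a.
Proof.
move=> dp dw t0 t1; set u := _ + _ => iu pu.
set X := dotp (g u) (c - p).
have up : p - u = - (t *: (c - p)) by apply/rowP => j; rewrite !mxE; ring.
have uw : w - u = (w - c) + (1 - t) *: (c - p).
  by apply/rowP => j; rewrite !mxE; ring.
have := tangent_le_freal iu dp; rewrite up dotpNr dotpZr -/X => tp.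
have := tangent_le_freal iu dw; rewrite uw dotpDr dotpZr -/X => tw.
have aX : a <= X by rewrite -(ler_pM2l t0); lra.
have : (1 - t) * a <= (1 - t) * X by rewrite ler_wpM2l // subr_ge0.
lra.
Qed.

Lemma dotp_grad_near_le y v e : intdom y -> 0 < e ->
  \forall y' \near y, dotp (g y') v <= dotp (g y) v + e.
Proof.
(* Pick h whose difference quotient at y is close to <g y, v>; the tangent
   inequality at y' bounds h <g y', v> by F (y' + h v) - F y', which is close
   to F (y + h v) - F y by continuity of F. *)
move=> iy e0.
have [h [h0 ihv hq]] : exists h, [/\ 0 < h, intdom (h *: v + y) &
    F (h *: v + y) - F y < h * (dotp (g y) v + e / 2)].
  have ray : (fun h : R => h *: v + y) @ 0^'+ --> y := cvg_ray v.
  have : \forall h \near 0^'+, [/\ 0 < h, intdom (h *: v + y) &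
      h^-1 * (F (h *: v + y) - F y) < dotp (g y) v + e / 2].
    near=> h; split.
    - by near: h; exact: (@nbhs_right_gt R 0).
    - by near: h; exact: ray (nbhs_interior iy).
    - near: h; apply: (diff_quotient_lt (f_diff iy)).
      by rewrite -dotp_g ltrDl divr_gt0.
  move=> /filter_ex[h [h0 ihv]]; rewrite mulrC ltr_pdivrMr // => hq.
  by exists h; split; rewrite // mulrC.
have shift : (fun y' => y' + h *: v) @ y --> h *: v + y.
  rewrite addrC; apply: (@cvgD _ _ _ _ (nbhs_filter y)); first exact: cvg_id.
  exact: cvg_cst.
have Fc z : intdom z -> F @ z --> F z.
  by move=> iz; exact: differentiable_continuous (f_diff iz).
have he : 0 < h * e / 4 by rewrite divr_gt0 ?mulr_gt0.
have F_shift := (@cvgrPdist_lt _ _ _ _ (nbhs_filter y) _ _).1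
  (cvg_comp _ _ shift (Fc _ ihv)) _ he.
have F_near := (@cvgrPdist_lt _ _ _ _ (nbhs_filter y) _ _).1 (Fc _ iy) _ he.
near=> y'.
have iy' : intdom y' by near: y'; exact: nbhs_interior.
have dy'v : dom f (y' + h *: v) by near: y'; exact: shift _ ihv.
have := tangent_le_freal_ray iy' dy'v.
have : `|F (h *: v + y) - F (y' + h *: v)| < h * e / 4 by near: y'; exact: F_shift.
have : `|F y - F y'| < h * e / 4 by near: y'; exact: F_near.
rewrite !ltr_norml => /andP[_ Fy] /andP[Fyv _] tangent.
by rewrite -(ler_pM2l h0); lra.
Unshelve. all: by end_near.
Qed.

Lemma grad_continuous y : intdom y -> {for y, continuous g}.
Proof.
move=> iy; apply/(@cvgrPdist_le _ _ _ _ (nbhs_filter y)) => e e0.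
have near_le (s : R) i :
    \forall y' \near y, s * g y' 0 i <= s * g y 0 i + e.
  apply: filterS (dotp_grad_near_le (s *: delta_mx 0 i) iy e0) => y'.
  by rewrite !dotpZr !dotp_delta.
have ub : \forall y' \near y, forall i, g y' 0 i <= g y 0 i + e.
  apply: (filter_forall (nbhs_filter y)) => i.
  by apply: filterS (near_le 1 i) => y'; rewrite !mul1r.
have lb : \forall y' \near y, forall i, - g y' 0 i <= - g y 0 i + e.
  apply: (filter_forall (nbhs_filter y)) => i.
  by apply: filterS (near_le (-1) i) => y'; rewrite !mulN1r.
apply: filterS2 ub lb => y' ub lb; apply: mx_norm_le (ltW e0) _ => i j.
rewrite (ord1 i) !mxE ler_norml; apply/andP; split; [have := ub j | have := lb j]; lra.
Qed.

Lemma bregman_ray_le p w t : intdom p -> dom f w -> 0 <= t -> t <= 1 ->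
  D (t *: w + (1 - t) *: p) p <= t * D w p.
Proof.
move=> ip dw t0 t1; have := freal_convex dw (interior_subset ip) t0 t1.
have -> : t *: w + (1 - t) *: p - p = t *: (w - p).
  by apply/rowP => j; rewrite !mxE; ring.
rewrite dotpZr; lra.
Qed.

Lemma bregman_continuous p z : intdom p -> intdom z ->
  {for z, continuous (fun w => D w p)}.
Proof.
move=> ip iz.
have -> : (fun w => D w p) = (fun w => F w - F p - 'd F p (w - p)).
  by apply: funext => w; rewrite dotp_g.
apply: (@cvgB _ _ _ _ (nbhs_filter z)).
  apply: (@cvgB _ _ _ _ (nbhs_filter z)); last exact: cvg_cst.
  exact: differentiable_continuous (f_diff iz).
have d_cont := diff_continuous (f_diff ip).
apply: (cvg_comp (fun w => w - p) ('d F p)); last exact: d_cont.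
by apply: (@cvgB _ _ _ _ (nbhs_filter z)); [exact: cvg_id | exact: cvg_cst].
Qed.

Lemma bregman_sphere_retract p w r : intdom p -> dom f w -> 0 < r -> r <= `|w - p| ->
  exists2 u, `|u - p| = r & D u p <= D w p.
Proof.
move=> ip dw r0 rw; have wp0 : 0 < `|w - p| by apply: lt_le_trans rw.
pose t := r / `|w - p|.
have t0 : 0 <= t by rewrite divr_ge0 // ltW.
have t1 : t <= 1 by rewrite ler_pdivrMr // mul1r.
exists (t *: w + (1 - t) *: p).
  have -> : t *: w + (1 - t) *: p - p = t *: (w - p).
    by apply/rowP => j; rewrite !mxE; ring.
  by rewrite normrZ ger0_norm // /t -mulrA mulVf ?mulr1 // gt_eqF.
have := bregman_ray_le ip dw t0 t1.
have : (1 - t) * D w p >= 0.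
  by apply: mulr_ge0; [rewrite subr_ge0 | exact: bregman_ge0].
lra.
Qed.

Lemma bregman_bounded_away p e : essentially_strictly_convex f ->
  intdom p -> 0 < e ->
  exists2 m, 0 < m & forall w, e <= `|w - p| -> (m%:E <= bregman f w p)%E.
Proof.
move=> f_sc ip e0; have [rho rho0 pball] := (nbhs_ballP _ _).1 (nbhs_interior ip).
pose r := Num.min e (rho / 2).
have r0 : 0 < r by rewrite lt_min e0 divr_gt0.
pose S := [set w : E | `|w - p| = r].
have r_rho : r < rho by rewrite gt_min ltr_pdivrMr // ltr_pMr // ltr1n orbT.
have S_int : S `<=` intdom.
  by move=> w Sw; apply: pball; rewrite -ball_normE /= distrC Sw.
have er w : e <= `|w - p| -> r <= `|w - p|.
  by move=> ew; apply: le_trans ew; rewrite ge_min lexx.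
have retract w ew dw := bregman_sphere_retract ip dw r0 (er w ew).
(* S is empty only when n = 0. *)
have [[u0 Su0]|S0] := pselect (S !=set0); last first.
  exists 1 => // w ew; have [dw|ndw] := pselect (dom f w).
    by have [u Su _] := retract w ew dw; case: S0; exists u.
  by rewrite bregman_notdom // leey.
have S_cont : {within S, continuous (fun w => D w p)}.
  apply: continuous_in_subspaceT => z; rewrite inE => Sz.
  exact: bregman_continuous ip (S_int z Sz).
have [c Sc cmin] := EVT_min_rV (ex_intro _ u0 Su0) (@compact_sphere _ _ p r) S_cont.
move: Sc; rewrite inE => Sc.
exists (D c p).
  apply: bregman_gt0 f_sc ip (S_int c Sc) _.
  by apply: contraTneq r0 => cp; rewrite -Sc cp subrr normr0 ltxx.
move=> w ew; have [dw|ndw] := pselect (dom f w); last first.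
  by rewrite bregman_notdom // leey.
rewrite bregmanE // lee_fin; have [u Su uw] := retract w ew dw.
by apply: le_trans uw; apply: cmin; rewrite inE.
Qed.

Lemma grad_bounded_segment c p a : intdom c -> dom f p ->
  (forall t, 0 < t -> t <= 1 -> F p + t * a <= F (t *: c + (1 - t) *: p)) ->
  exists2 K, 0 <= K &
    forall t, 0 < t -> t <= 1 -> `|g (t *: c + (1 - t) *: p)| <= K.
Proof.
move=> ic dp grow; have [rho rho0 cball] := (nbhs_ballP _ _).1 ic.
pose r := rho / 2.
have r0 : 0 < r by rewrite divr_gt0.
pose w (s : R) i := c + (s * r) *: (delta_mx 0 i : E).
have dw s i : `|s| = 1 -> dom f (w s i).
  move=> s1; apply: cball; rewrite -ball_normE /= /w opprD addNKr normrN normrZ.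
  rewrite normrM s1 mul1r (gtr0_norm r0).
  apply: (@le_lt_trans _ _ (r * 1)).
    by rewrite ler_wpM2l ?(ltW r0) // mx_norm_delta_le.
  by rewrite mulr1 ltr_pdivrMr // ltr_pMr // ltr1n.
pose A s i := F (w s i) - F p - a.
pose K := \sum_i (`|A 1 i| + `|A (-1) i|) / r.
have K0 : 0 <= K by apply: sumr_ge0 => i _; rewrite divr_ge0 // ltW.
exists K => // t t0 t1.
set u := _ + _; have iu : intdom u := interior_segment ic dp t0 t1.
have gA s i : `|s| = 1 -> s * r * g u 0 i <= A s i.
  move=> s1; have := dotp_grad_segment_le dp (dw s i s1) t0 t1 iu (grow t t0 t1).
  have -> : w s i - c = (s * r) *: delta_mx 0 i by rewrite /w addrC addKr.
  by rewrite dotpZr dotp_delta.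
apply: mx_norm_le => // i0 i; rewrite (ord1 i0).
apply: le_trans (_ : (`|A 1 i| + `|A (-1) i|) / r <= K); last first.
  rewrite /K (bigD1 i) //= lerDl; apply: sumr_ge0 => j _.
  by rewrite divr_ge0 // ltW.
rewrite ler_pdivlMr // -[r in _ * r]gtr0_norm // -normrM ler_norml.
have := gA 1 i (normr1 _); have := gA (-1) i (normrN1 _).
have := ler_norm (A 1 i); have := ler_norm (A (-1) i).
have := normr_ge0 (A 1 i); have := normr_ge0 (A (-1) i).
move=> *; apply/andP; split; lra.
Qed.

Lemma bregman_near_bounded x y : intdom y -> exists M, \forall y' \near y, D x y' <= M.
Proof.
move=> iy; exists (`|F x| + `|F y| + 1 + n%:R * ((`|g y| + 1) * (`|x - y| + 1))).
have F_near := (@cvgrPdist_lt _ _ _ _ (nbhs_filter y) _ _).1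
  (differentiable_continuous (f_diff iy)) 1 ltr01.
have g_near := (@cvgrPdist_le _ _ _ _ (nbhs_filter y) _ _).1 (grad_continuous iy) 1 ltr01.
have y_near := (@cvgrPdist_le _ _ _ _ (nbhs_filter y) _ _).1 (@cvg_id _ (nbhs y)) 1 ltr01.
near=> y'.
have Fy' : `|F y - F y'| < 1 by near: y'.
have gy' : `|g y - g y'| <= 1 by near: y'.
have yy' : `|y - y'| <= 1 by near: y'.
have g_le : `|g y'| <= `|g y| + 1.
  by have := lerB_dist (g y') (g y); rewrite distrC; lra.
have xy_le : `|x - y'| <= `|x - y| + 1.
  by have := ler_distD y x y'; lra.
have := normr_dotp_le (g y') (x - y').
have : n%:R * `|g y'| * `|x - y'| <= n%:R * ((`|g y| + 1) * (`|x - y| + 1)).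
  by rewrite -mulrA ler_wpM2l // ler_pM.
have := ler_norm (F x); have := ler_norm (- F y).
have := ler_norm (- dotp (g y') (x - y')).
move: Fy'; rewrite !normrN ltr_norml => /andP[_ Fy'] *.
lra.
Unshelve. all: by end_near.
Qed.

Section Projection.
Variable C : set 'rV[R]_n.
Hypothesis C_convex : convex_set_E C.
Hypotheses (f_smooth : essentially_smooth f) (C_int : C `&` intdom !=set0).

Lemma bregman_proj_dom y p c : intdom y -> is_bregman_proj f C y p ->
  C c -> dom f c -> dom f p.
Proof.
move=> iy [_ pmin] Cc dc; apply: contrapT => ndp.
by have := pmin c Cc; rewrite bregman_notdom // bregmanE // leNgt ltey.
Qed.

Lemma bregman_proj_segment y p c t : intdom y -> dom f p ->
  is_bregman_proj f C y p -> C c -> dom f c -> 0 <= t -> t <= 1 ->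
  F p + t * dotp (g y) (c - p) <= F (t *: c + (1 - t) *: p).
Proof.
move=> iy dp [Cp pmin] Cc dc t0 t1.
have := pmin _ (C_convex Cc Cp t0 t1); rewrite !bregmanE //; last exact: convex_dom.
have -> : t *: c + (1 - t) *: p - y = t *: (c - p) + (p - y).
  by apply/rowP => j; rewrite !mxE; ring.
rewrite lee_fin !dotpDr dotpZr !dotpDr; lra.
Qed.

Lemma bregman_proj_variational y p z : intdom y -> intdom p ->
  is_bregman_proj f C y p -> C z -> dom f z -> 0 <= dotp (g p - g y) (z - p).
Proof.
move=> iy ip [Cp pmin] Cz dz; rewrite dotpBl subr_ge0 [dotp (g p) _]dotp_g.
apply: (@le_diff_of_quotient _ _ F p (z - p) (f_diff ip)) => t t0 t1.
have -> : t *: (z - p) + p = t *: z + (1 - t) *: p.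
  by rewrite scalerBr scalerBl scale1r addrA addrAC.
have := bregman_proj_segment iy (interior_subset ip) (conj Cp pmin) Cz dz (ltW t0) t1.
by move=> seg; rewrite mulrC ler_pdivlMr //; lra.
Qed.

Lemma bregman_proj_interior y p : intdom y -> is_bregman_proj f C y p -> intdom p.
Proof.
move=> iy py; have [_ _ blowup] := f_smooth; have [c [Cc ic]] := C_int.
have dc := interior_subset ic.
have dp := bregman_proj_dom iy py Cc dc.
have [K K0 gK] := grad_bounded_segment ic dp
  (fun t t_gt0 t_le1 => bregman_proj_segment iy dp py Cc dc (ltW t_gt0) t_le1).
apply: contrapT => nip.
pose u k := harmonic k *: c + (1 - harmonic k) *: p.
have h0 k : 0 < harmonic k :> R by rewrite invr_gt0.
have h1 k : harmonic k <= 1 :> R by rewrite invf_le1 // ler1n.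
have iu k : intdom (u k) := interior_segment ic dp (h0 k) (h1 k).
have u_cvg : u @ \oo --> p.
  suff : u @ \oo --> 0 *: c + (1 - 0) *: p by rewrite scale0r add0r subr0 scale1r.
  apply: cvgD; apply: cvgZ; try exact: cvg_cst; first exact: cvg_harmonic.
  by apply: cvgB; [exact: cvg_cst | exact: cvg_harmonic].
have bp : boundary (dom f) p by split => //; exact: subset_closure.
have := blowup u p iu u_cvg bp; rewrite gradE.
move=> /cvgryPge /(_ (n%:R * K + 1)) /filter_ex [k].
have : n%:R * `|g (u k)| <= n%:R * K by rewrite ler_wpM2l //; exact: gK.
have := enorm_le_normr (g (u k)); lra.
Qed.

Lemma bregman_proj_pythagoras y p x : intdom y -> intdom p ->
  is_bregman_proj f C y p -> C x -> dom f x -> D x p + D p y <= D x y.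
Proof.
move=> iy ip py Cx dx; have := bregman_proj_variational iy ip py Cx dx.
rewrite !dotpBl !dotpBr; lra.
Qed.

Lemma bregman_proj_stable y y' p p' : intdom y -> intdom y' ->
  intdom p -> intdom p' -> is_bregman_proj f C y p -> is_bregman_proj f C y' p' ->
  D p' p <= dotp (g y' - g y) (p' - p).
Proof.
move=> iy iy' ip ip' py py'.
have := bregman_proj_variational iy ip py py'.1 (interior_subset ip').
have := bregman_proj_variational iy' ip' py' py.1 (interior_subset ip).
have := bregman_ge0 ip' (interior_subset ip).
rewrite !dotpBl !dotpBr; lra.
Qed.

Section Selection.
Variable P : 'rV[R]_n -> 'rV[R]_n.
Hypothesis P_proj : forall y, intdom y -> is_bregman_proj f C y (P y).

Lemma bregman_proj_near_bounded x y : C x -> dom f x ->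
  coercive (bregman f x) -> intdom y -> exists r, \forall y' \near y, enorm (P y') <= r.
Proof.
move=> Cx dx x_coercive iy; have [M DM] := bregman_near_bounded x iy.
have [r rM] := x_coercive M; exists r; near=> y'.
have iy' : intdom y' by near: y'; exact: nbhs_interior.
have ip' := bregman_proj_interior iy' (P_proj iy').
rewrite leNgt; apply/negP => /rM; rewrite bregmanE // lte_fin.
have := bregman_proj_pythagoras iy' ip' (P_proj iy') Cx dx.
have := bregman_ge0 iy' (interior_subset ip').
have : D x y' <= M by near: y'.
lra.
Unshelve. all: by end_near.
Qed.

Lemma bregman_proj_continuous y : essentially_strictly_convex f ->
  (exists x, dom f x /\ C x /\ coercive (bregman f x)) -> intdom y ->
  {for y, continuous P}.
Proof.
move=> f_sc [x [dx [Cx x_coercive]]] iy.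
apply/(@cvgrPdist_lt _ _ _ _ (nbhs_filter y)) => eps eps0.
have ip := bregman_proj_interior iy (P_proj iy).
have [m m0 Dm] := bregman_bounded_away f_sc ip eps0.
have [r Pr] := bregman_proj_near_bounded Cx dx x_coercive iy.
pose K := `|r| + `|P y|.
have nK1 : 0 < n%:R * K + 1 by rewrite ltr_wpDl // mulr_ge0 ?addr_ge0.
pose e := m / (n%:R * K + 1).
have e0 : 0 < e by rewrite divr_gt0.
have eK : e * (n%:R * K + 1) = m by rewrite mulfVK // gt_eqF.
have g_near := (@cvgrPdist_le _ _ _ _ (nbhs_filter y) _ _).1 (grad_continuous iy) e e0.
near=> y'.
have iy' : intdom y' by near: y'; exact: nbhs_interior.
have ip' := bregman_proj_interior iy' (P_proj iy').
have PK : `|P y' - P y| <= K.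
  have : enorm (P y') <= r by near: y'.
  have := normr_le_enorm (P y'); have := ler_normB (P y') (P y).
  have := ler_norm r; rewrite /K; lra.
have ge : `|g y' - g y| <= e by rewrite distrC; near: y'.
have stable := bregman_proj_stable iy iy' ip ip' (P_proj iy) (P_proj iy').
have dotp_le := ler_norm (dotp (g y' - g y) (P y' - P y)).
have dotp_bound := normr_dotp_le (g y' - g y) (P y' - P y).
have prod_le : n%:R * (`|g y' - g y| * `|P y' - P y|) <= n%:R * (e * K).
  by rewrite ler_wpM2l // ler_pM.
rewrite distrC ltNge; apply/negP => /Dm.
by rewrite (bregmanE (interior_subset ip') ip) lee_fin; lra.
Unshelve. all: by end_near.
Qed.

End Selection.

End Projection.

End ConvexDifferentiable.

Unset Implicit Arguments.

Theorem mainTheorem6 (R : realType) (n : nat) (Phi : 'rV[R]_n -> \bar R)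
    (C : set 'rV[R]_n) (P : 'rV[R]_n -> 'rV[R]_n) :
  Gamma0 Phi -> Legendre Phi ->
  closed C -> convex_set_E C -> C `&` interior (dom Phi) !=set0 ->
  (exists x, dom Phi x /\ C x /\ coercive (bregman Phi x)) ->
  (forall y, interior (dom Phi) y -> is_bregman_proj Phi C y (P y)) ->
  {within interior (dom Phi), continuous P}.
Proof.
(* Closedness of C and lower semicontinuity of Phi only serve the existence
   of the projections, which the hypothesis on P provides. *)
move=> [f_proper _ f_convex] [f_smooth f_sc] _ C_convex C_int x_coercive P_proj.
have [_ f_diff _] := f_smooth.
apply: continuous_in_subspaceT => y; rewrite inE => iy.
exact: (bregman_proj_continuous f_proper f_convex f_diff (erefl (grad Phi))
  C_convex f_smooth C_int P_proj f_sc x_coercive iy).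
Qed.
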